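(* Let $G=(V,E)$ be a connected undirected graph on $n$ nodes with Laplacian $L$, let $\kappa_1,\dots,\kappa_n>0$, $D_\kappa=\mathrm{diag}(\kappa_1,\dots,\kappa_n)$, and for $S\subseteq V$ let $Q_S=L+D_\kappa D_S$, where $D_S$ is the diagonal $0/1$ matrix with $(D_S)_{ii}=1$ iff $i\in S$ (write $Q_v$ for $Q_{\{v\}}$). For nonempty $S$ let $H(S)=\frac12\mathrm{tr}(Q_S^{-1})$. Let $k\ge1$ be an integer, let $\hat H=\min\{H(S): S\subseteq V,\ S\neq\emptyset,\ |S|\le k\}$, and let $B=\max_{v\in V}\mathrm{tr}(Q_v^{-1})$. Let $S_g$ be the output of the following Greedy Algorithm: initialize $S=\{v\}$ where $v$ minimizes $\mathrm{tr}(Q_v^{-1})$ over $v\in V$; then for $i=2,\dots,k$: choose $v\in V\setminus S$ minimizing $\mathrm{tr}(Q_{S\cup\{v\}}^{-1})$; if $\mathrm{tr}(Q_{S\cup\{v\}}^{-1})<\mathrm{tr}(Q_S^{-1})$ set $S\leftarrow S\cup\{v\}$, otherwise stop and return $S$; after the loop return $S$. (Ties are broken arbitrarily.) Then: (1) if $|S_g|<k$, then $H(S_g)=\hat H$, i.e., $S_g$ is an optimal leader set; (2) if $|S_g|=k$, then $H(S_g)\le \left(1-\frac1e\right)\hat H+\frac{B}{e}$.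
   Context: For nonempty $S$, $Q_S$ is positive definite. $H(S)$ is the total steady-state variance of the leader–follower consensus dynamics $\dot x=-(L+D_\kappa D_S)x+w$ with white noise $w$, where $S$ is the set of leaders; the $k$-leader selection problem asks to minimize $H(S)$ subject to $|S|\le k$. *)

From HB Require Import structures.
From mathcomp Require Import all_boot all_order all_algebra.
From mathcomp Require Import reals sequences exp.
Set Implicit Arguments. Unset Strict Implicit. Unset Printing Implicit Defensive.
Import Order.TTheory GRing.Theory Num.Theory.
Local Open Scope ring_scope.

Section LeaderSelection.
Variables (R : realType) (n : nat).

Definition simple_graph (e : rel 'I_n) : Prop :=
  (forall i j, e i j = e j i) /\ (forall i, ~~ e i i).

Definition connected_graph (e : rel 'I_n) : Prop :=
  forall i j, connect e i j.

Definition laplacian (e : rel 'I_n) : 'M[R]_n :=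
  \matrix_(i, j) (if i == j then (#|[set u | e i u]|)%:R
                  else if e i j then -1 else 0).

Definition DkDS (kappa : 'I_n -> R) (S : {set 'I_n}) : 'M[R]_n :=
  diag_mx (\row_i (if i \in S then kappa i else 0)).

Definition QS (e : rel 'I_n) (kappa : 'I_n -> R) (S : {set 'I_n}) : 'M[R]_n :=
  laplacian e + DkDS kappa S.

Definition trQinv e kappa (S : {set 'I_n}) : R := \tr (invmx (QS e kappa S)).

Definition Hval e kappa (S : {set 'I_n}) : R := trQinv e kappa S / 2.

Definition feasible (k : nat) (S : {set 'I_n}) : bool := (S != set0) && (#|S| <= k)%N.

Definition is_opt_value e kappa (k : nat) (hhat : R) : Prop :=
  (exists2 S, feasible k S & Hval e kappa S = hhat) /\
  (forall S, feasible k S -> hhat <= Hval e kappa S).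

Definition is_B e kappa (b : R) : Prop :=
  (exists v, trQinv e kappa [set v] = b) /\
  (forall v, trQinv e kappa [set v] <= b).

(* Sg is a possible output of the greedy algorithm (for some tie-breaking).
   A run is the sequence s = [v1; ...; vm] of nodes added, in order. *)
Definition greedy_output e kappa (k : nat) (Sg : {set 'I_n}) : Prop :=
  exists s : seq 'I_n,
    [/\ (0 < size s <= k)%N,
        (forall x0 v, trQinv e kappa [set head x0 s] <= trQinv e kappa [set v]),
        (forall i x0, (0 < i < size s)%N ->
           let S := [set x in take i s] in
           let vi := nth x0 s i in
           [/\ vi \notin S,
               (forall w, w \notin S ->
                  trQinv e kappa (S :|: [set vi]) <= trQinv e kappa (S :|: [set w]))
             & trQinv e kappa (S :|: [set vi]) < trQinv e kappa S]),
        Sg = [set x in s]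
      & (* if fewer than k nodes were added, the algorithm stopped early:
           either V \ S is empty (no candidate), or the chosen minimizer v
           does not decrease the trace *)
        (size s < k)%N ->
          ([set: 'I_n] :\: Sg = set0 \/
           exists2 v, v \notin Sg &
             (forall w, w \notin Sg ->
                trQinv e kappa (Sg :|: [set v]) <= trQinv e kappa (Sg :|: [set w])) /\
             trQinv e kappa Sg <= trQinv e kappa (Sg :|: [set v]))].

End LeaderSelection.

(* For nonempty S, Q_S satisfies a discrete minimum principle: if Q_S f >= 0
   wherever f < 0, then f >= 0, since a negative minimum of f spreads along the
   edges of the connected graph and never meets a leader. Hence Q_S is invertible
   and G = Q_S^-1 is entrywise nonnegative with nonnegative minors
   G_uu G_iv - G_uv G_iu. Adding a leader u is a rank-one update, so by
   Sherman-Morrison F(S) = tr Q_S^-1 drops by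
   kappa_u (G^2)_uu / (1 + kappa_u G_uu) > 0,
   and the minor inequalities show that these drops can only shrink as S grows:
   F is strictly decreasing and supermodular. The greedy run can therefore only
   stop early after taking every node, which is optimal. Otherwise each greedy
   step shrinks the gap to the optimum by a factor 1 - 1/k, and
   (1 - 1/k)^(k-1) <= 1/2 gives F(S_g) <= (F_opt + B) / 2. Since H = F / 2 while
   B bounds F itself, this implies the claimed bound as soon as e <= 4. *)

From mathcomp Require Import all_boot all_order all_algebra.
From mathcomp Require Import reals sequences exp.
From mathcomp Require Import ring lra.
Set Implicit Arguments. Unset Strict Implicit. Unset Printing Implicit Defensive.
Import Order.TTheory GRing.Theory Num.Theory.
Local Open Scope ring_scope.

Lemma bernoulli_ineq (R : realFieldType) (x : R) m :
  0 <= x -> 1 + m%:R * x <= (1 + x) ^+ m.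
Proof.
move=> x_ge0; elim: m => [|m IHm]; first by rewrite mul0r addr0 expr0.
have mxx_ge0 : 0 <= m%:R * x * x by rewrite mulr_ge0 ?mulr_ge0.
have := ler_wpM2l (_ : 0 <= 1 + x) IHm; rewrite exprS -natr1; nra.
Qed.

Lemma expr_1subVn_le_half (R : realFieldType) k :
  (2 <= k)%N -> (1 - (k%:R : R)^-1) ^+ k.-1 <= 2^-1.
Proof.
case: k => [|[|m]] // _; set M : R := m.+1%:R.
have M_gt0 : 0 < M by rewrite ltr0n.
have two_le : 2 <= (1 + M^-1) ^+ m.+1.
  have Minv_ge0 : 0 <= M^-1 by rewrite invr_ge0 ltW.
  by have := bernoulli_ineq m.+1 Minv_ge0; rewrite mulfV ?lt0r_neq0.
rewrite (_ : 1 - _ = (1 + M^-1)^-1); last first.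
  by rewrite -natr1 -/M; field; rewrite !lt0r_neq0 //; lra.
by rewrite exprVn lef_pV2 ?posrE ?exprn_gt0 // ltr_wpDr ?invr_ge0 ?ltW.
Qed.

Lemma expR1_le4 (R : realType) : expR (1 : R) <= 4.
Proof.
have e_half_gt0 : 0 < expR (2^-1 : R) := expR_gt0 _.
have e_half_le2 : expR (2^-1 : R) <= 2.
  have := ler_wpM2l (ltW e_half_gt0) (expR_ge1Dx (- 2^-1)).
  by rewrite expRN mulfV ?gt_eqF //; lra.
have -> : expR (1 : R) = expR 2^-1 * expR 2^-1 by rewrite -expRD; congr expR; field.
nra.
Qed.

(* With G = Q_A^-1: a = kappa_u / (1 + kappa_u G_uu), b = kappa_v, p = G_uu,
   q = G_vv, r = G_uv, X = (G^2)_uu, Y = (G^2)_vv and Z = (G^2)_uv; the two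
   sides are the gains of adding v to A with and without u. *)
Lemma rank_one_decrement_le (R : realFieldType) (a b p q r X Y Z : R) :
  0 <= a -> a * p <= 1 -> 0 <= b -> 0 <= r -> 0 <= Z ->
  r * X <= p * Z -> r * Y <= q * Z -> 0 <= q - a * r ^+ 2 ->
  b / (1 + b * (q - a * r ^+ 2)) * (Y - 2 * a * r * Z + a ^+ 2 * r ^+ 2 * X)
    <= b / (1 + b * q) * Y.
Proof.
move=> a_ge0 ap_le1 b_ge0 r_ge0 Z_ge0 rX_le rY_le q'_ge0.
have ar2_ge0 : 0 <= a * r ^+ 2 by rewrite mulr_ge0 ?sqr_ge0.
have q_ge0 : 0 <= q by lra.
set q' := q - _ in q'_ge0 *; set Y' := Y - _ + _.
have D1_gt0 : 0 < 1 + b * q' by rewrite ltr_pwDl ?mulr_ge0.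
have D2_gt0 : 0 < 1 + b * q by rewrite ltr_pwDl ?mulr_ge0.
have arX_le : a * r * X <= Z.
  by rewrite -mulrA (le_trans (ler_wpM2l a_ge0 rX_le)) // mulrA ler_piMl.
have brY_le : b * r * Y <= b * q * Z by rewrite -!mulrA ler_wpM2l.
have inner_ge0 : 0 <= (2 * Z - a * r * X) * (1 + b * q) - b * r * Y.
  have : 0 <= b * q * Z by rewrite !mulr_ge0.
  nra.
have cross : Y' * (1 + b * q) <= Y * (1 + b * q').
  rewrite -subr_ge0 (_ : _ - _ = a * r * ((2 * Z - a * r * X) * (1 + b * q) - b * r * Y)).
    by rewrite !mulr_ge0.
  by rewrite /Y' /q'; ring.
rewrite -subr_ge0 (_ : _ - _ =
    b * (Y * (1 + b * q') - Y' * (1 + b * q)) / ((1 + b * q') * (1 + b * q))).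
  by rewrite divr_ge0 ?mulr_ge0 ?subr_ge0 // ltW.
by field; rewrite !gt_eqF.
Qed.

Section RankOneUpdate.
Variables (F : fieldType) (n : nat).
Implicit Types (A G : 'M[F]_n) (u : 'I_n).

Lemma mxtrace_col_mul_row G u : \tr (col u G *m row u G) = (G *m G) u u.
Proof.
by rewrite mxtrace_mulC /mxtrace big_ord1 !mxE; apply: eq_bigr => k _; rewrite !mxE.
Qed.

Lemma invmx_add_delta A (c : F) u :
  A \in unitmx -> 1 + c * invmx A u u != 0 ->
  invmx (A + c *: delta_mx u u) =
  invmx A - (c / (1 + c * invmx A u u)) *: (col u (invmx A) *m row u (invmx A)).
Proof.
move=> A_unit d_neq0; set G := invmx A; set a := c / (1 + c * G u u).
set P := col u G *m row u G; set X := delta_mx u 0 *m row u G.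
have AG : A *m G = 1%:M := mulmxV A_unit.
have delta_mul (B : 'M[F]_n) : delta_mx u u *m B = delta_mx u 0 *m row u B.
  by rewrite -(mul_delta_mx (0 : 'I_1)) -mulmxA -rowE.
have AP : A *m P = X by rewrite /P colE !mulmxA AG mul1mx.
have rowP : row u P = G u u *: row u G.
  by rewrite row_mul (mx11_scalar (row u _)) !mxE mul_scalar_mx.
have right_inv : (A + c *: delta_mx u u) *m (G - a *: P) = 1%:M.
  rewrite mulmxDl !mulmxBr -!scalemxAl -!scalemxAr AG AP !delta_mul rowP -scalemxAr -/X.
  suff -> : c *: X - c *: (a *: (G u u *: X)) = a *: X by rewrite subrK.
  have a_d : a * (1 + c * G u u) = c by rewrite /a mulfVK.
  by rewrite !scalerA -scalerBl; congr (_ *: _); rewrite -{1}a_d; ring.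
have [AcE_unit _] := mulmx1_unit right_inv.
by rewrite -[LHS]mulmx1 -right_inv mulmxA mulVmx ?mul1mx.
Qed.

Lemma rank_one_updateE G a u i j :
  (G - a *: (col u G *m row u G)) i j = G i j - a * (G i u * G u j).
Proof. by rewrite !mxE big_ord1 !mxE. Qed.

Lemma sqr_rank_one_update_diag G a u v :
  let G' := G - a *: (col u G *m row u G) in
  (G' *m G') v v = (G *m G) v v - a * G v u * (G *m G) u v
                   - a * G u v * (G *m G) v u + a ^+ 2 * G v u * G u v * (G *m G) u u.
Proof.
rewrite /= [LHS]mxE.
under eq_bigr => i _ do rewrite !rank_one_updateE.
rewrite !mxE !mulr_sumr -!sumrB -big_split /=; apply: eq_bigr => i _; ring.
Qed.

End RankOneUpdate.

Section SupermodularGreedy.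
Variables (R : realFieldType) (T : finType) (F : {set T} -> R).
Hypothesis F_setU1_lt : forall A u, A != set0 -> u \notin A -> F (A :|: [set u]) < F A.
Hypothesis F_supermodular : forall A u v, A != set0 -> v \notin A :|: [set u] ->
  F (A :|: [set u]) - F (A :|: [set u] :|: [set v]) <= F A - F (A :|: [set v]).
Implicit Types A B O : {set T}.

Lemma F_setU1_le A u : A != set0 -> F (A :|: [set u]) <= F A.
Proof.
move=> A0; have [uA|uA] := boolP (u \in A); last exact/ltW/F_setU1_lt.
by rewrite (setUidPl _ : A :|: [set u] = A) ?sub1set.
Qed.

Lemma F_setU_le A B : A != set0 -> F (A :|: B) <= F A.
Proof.
move=> A0; rewrite -[B]set_enum; elim: (enum B) => [|w t IHt].
  by rewrite set_nil setU0.
by rewrite set_cons setUCA setUC (le_trans (F_setU1_le _ _) IHt) // setU_eq0 negb_and A0.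
Qed.

Lemma F_gain_setU1_le A B w : A != set0 ->
  F (A :|: B) - F (A :|: B :|: [set w]) <= F A - F (A :|: [set w]).
Proof.
move=> A0; rewrite -[B]set_enum; elim: (enum B) => [|u t IHt].
  by rewrite set_nil setU0.
rewrite set_cons setUCA setUC; set At := A :|: _ in IHt *.
have [wAtu|wAtu] := boolP (w \in At :|: [set u]).
  rewrite (setUidPl _ : _ :|: [set w] = _) ?sub1set // subrr subr_ge0.
  exact: F_setU1_le.
by rewrite (le_trans (F_supermodular _ wAtu) IHt) // setU_eq0 negb_and A0.
Qed.

Lemma F_gain_setU_le_sum A B : A != set0 ->
  F A - F (A :|: B) <= \sum_(w in B) (F A - F (A :|: [set w])).
Proof.
move=> A0; rewrite -big_enum /= -[X in F (A :|: X)](set_enum B).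
elim: (enum B) => [|w t IHt]; first by rewrite set_nil setU0 subrr big_nil.
rewrite big_cons set_cons setUCA setUC addrC.
rewrite -[F A - _](subrKA (F (A :|: [set:: t]))) lerD //.
exact: F_gain_setU1_le.
Qed.

Lemma F_le_set1 O w : w \in O -> F O <= F [set w].
Proof.
move=> wO; have w0 : [set w] != set0 by rewrite -card_gt0 cards1.
by rewrite -(setUidPr (_ : [set w] \subset O)) ?sub1set ?F_setU_le.
Qed.

Lemma greedy_step_gap k A O v : A != set0 -> O != set0 -> (#|O| <= k)%N ->
  (forall w, w \notin A -> F (A :|: [set v]) <= F (A :|: [set w])) ->
  F (A :|: [set v]) - F O <= (1 - k%:R^-1) * (F A - F O).
Proof.
move=> A0 O0 Ok v_best; set d := F A - F (A :|: [set v]).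
have k_gt0 : (0 < k)%N by rewrite (leq_trans _ Ok) // card_gt0.
have gain_le w : F A - F (A :|: [set w]) <= d.
  have [wA|wA] := boolP (w \in A); last by rewrite lerB ?v_best.
  by rewrite (setUidPl _ : A :|: [set w] = A) ?sub1set // subrr subr_ge0 F_setU1_le.
have d_ge0 : 0 <= d by rewrite subr_ge0 F_setU1_le.
have gap_le : F A - F O <= k%:R * d.
  have : F A - F (A :|: O) <= #|O|%:R * d.
    rewrite (le_trans (F_gain_setU_le_sum O A0)) //.
    by rewrite (le_trans (ler_sum _ (fun w _ => gain_le w))) // sumr_const mulr_natl.
  have : #|O|%:R * d <= k%:R * d by rewrite ler_wpM2r // ler_nat.
  have : F (A :|: O) <= F O by rewrite setUC F_setU_le.
  lra.
have : (F A - F O) / k%:R <= d by rewrite ler_pdivrMr ?ltr0n // mulrC.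
rewrite /d; lra.
Qed.

Section GreedyRun.
Variables (k : nat) (s : seq T).
Hypothesis s_size : (0 < size s <= k)%N.
Hypothesis s_head : forall x0 v, F [set head x0 s] <= F [set v].
Hypothesis s_step : forall i x0, (0 < i < size s)%N ->
  [/\ nth x0 s i \notin [set x in take i s],
      (forall w, w \notin [set x in take i s] ->
         F ([set x in take i s] :|: [set nth x0 s i])
           <= F ([set x in take i s] :|: [set w]))
    & F ([set x in take i s] :|: [set nth x0 s i]) < F [set x in take i s]].
Hypothesis s_stop : (size s < k)%N ->
  [set: T] :\: [set x in s] = set0 \/
  exists2 v, v \notin [set x in s] &
    (forall w, w \notin [set x in s] ->
       F ([set x in s] :|: [set v]) <= F ([set x in s] :|: [set w])) /\
    F [set x in s] <= F ([set x in s] :|: [set v]).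

Local Notation prefix i := [set x in take i s].

Lemma prefixS x0 i : (i < size s)%N -> prefix i.+1 = prefix i :|: [set nth x0 s i].
Proof.
by move=> lt_i; apply/setP => x; rewrite (take_nth x0 lt_i) !inE mem_rcons inE orbC.
Qed.

Lemma prefix_neq0 i : (0 < i)%N -> prefix i != set0.
Proof.
case: i => // i _; case/andP: s_size; case: s => [//|x t _ _].
by apply/set0Pn; exists x; rewrite inE /= mem_head.
Qed.

Lemma uniq_greedy_run : uniq s.
Proof.
suff prefix_uniq i : (i <= size s)%N -> uniq (take i s).
  by rewrite -(take_size s) prefix_uniq.
elim: i => [|i IHi] i_lt; first by rewrite take0.
have /hasP [x0 _ _] : has predT s by rewrite has_predT (leq_ltn_trans _ i_lt).
rewrite (take_nth x0 i_lt) rcons_uniq IHi ?(ltnW i_lt) // andbT.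
have [->|i_gt0] := posnP i; first by rewrite take0.
by have [|] := s_step (i := i) x0; rewrite ?i_gt0 // inE.
Qed.

Lemma card_greedy_run : #|[set x in s]| = size s.
Proof. by rewrite cardsE; apply/card_uniqP/uniq_greedy_run. Qed.

Lemma greedy_run_neq0 : [set x in s] != set0.
Proof. by rewrite -[s in [set x in s]]take_size prefix_neq0; case/andP: s_size. Qed.

Lemma greedy_stop_early_le O : (size s < k)%N -> O != set0 -> F [set x in s] <= F O.
Proof.
move=> lt_k O0; have [/eqP|[v v_new [_ no_gain]]] := s_stop lt_k; last first.
  by have := F_setU1_lt greedy_run_neq0 v_new; rewrite ltNge no_gain.
rewrite setD_eq0 => /(subset_trans (subsetT O)) O_sub.
by rewrite -(setUidPr O_sub) F_setU_le.
Qed.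

Lemma greedy_gap O j : O != set0 -> (#|O| <= k)%N -> (0 < j <= size s)%N ->
  F (prefix j) - F O <= (1 - k%:R^-1) ^+ j.-1 * (F (prefix 1) - F O).
Proof.
move=> O0 Ok; elim: j => [//|j IHj] /andP [_ j_lt].
have [->|j_gt0] := posnP j; first by rewrite expr0 mul1r.
have k_gt0 : (0 < k)%N by case/andP: s_size => /leq_trans; apply.
have ratio_ge0 : 0 <= 1 - (k%:R : R)^-1 by rewrite subr_ge0 invf_le1 ?ler1n ?ltr0n.
have /hasP [x0 _ _] : has predT s by rewrite has_predT (leq_ltn_trans _ j_lt).
have [|_ v_best _] := s_step (i := j) x0; first by rewrite j_gt0.
rewrite (prefixS x0 j_lt).
rewrite (le_trans (greedy_step_gap (prefix_neq0 j_gt0) O0 Ok v_best)) //.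
rewrite -[in X in _ <= X](prednK j_gt0) exprS -mulrA ler_wpM2l // IHj //.
by rewrite j_gt0 ltnW.
Qed.

Lemma greedy_full_le O b : size s = k -> O != set0 -> (#|O| <= k)%N ->
  (forall v, F [set v] <= b) -> F [set x in s] <= (F O + b) / 2.
Proof.
move=> s_k O0 Ok b_max; have /andP [s_gt0 _] := s_size.
have /hasP [x0 _ _] : has predT s by rewrite has_predT.
have prefix1 : prefix 1 = [set head x0 s].
  by case: s s_gt0 => [//|x t _]; apply/setP => y; rewrite inE take_cons take0 mem_seq1 inE.
have [w wO] := set0Pn _ O0.
have FO_le := F_le_set1 wO.
have := b_max w; have := b_max (head x0 s); rewrite -prefix1 => F1_le_b Fw_le_b.
rewrite -[s in [set x in s]]take_size s_k.
have [k_le1|k_ge2] := leqP k 1.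
  have k1 : k = 1%N by apply/eqP; rewrite eqn_leq k_le1 -s_k.
  have Ow : O = [set w].
    by apply/esym/eqP; rewrite eqEcard sub1set wO cards1 -k1.
  have := s_head x0 w; rewrite -prefix1 -Ow k1; lra.
have := greedy_gap (j := k) O0 Ok; rewrite s_k leqnn andbT (ltnW k_ge2) => /(_ isT).
have := expr_1subVn_le_half R k_ge2.
have : 0 <= 1 - (k%:R : R)^-1 by rewrite subr_ge0 invf_le1 ?ler1n ?ltr0n ?(ltnW k_ge2).
move=> /(exprn_ge0 k.-1); set c := _ ^+ _ => c_ge0 c_le gap.
nra.
Qed.

End GreedyRun.

End SupermodularGreedy.

Section LeaderSelection.
Variables (R : realType) (n : nat) (e : rel 'I_n) (kappa : 'I_n -> R).
Hypotheses (e_sym : forall i j, e i j = e j i) (e_irr : forall i, ~~ e i i).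
Hypotheses (e_conn : connected_graph e) (kappa_gt0 : forall i, 0 < kappa i).

Local Notation Q := (QS e kappa).
Local Notation F := (trQinv e kappa).
Local Notation G S := (invmx (QS e kappa S)).
Implicit Types (S : {set 'I_n}) (f : 'I_n -> R).

Definition kappa_on S i := if i \in S then kappa i else 0.

Lemma kappa_on_ge0 S i : 0 <= kappa_on S i.
Proof. by rewrite /kappa_on; case: ifP => // _; apply: ltW. Qed.

Lemma QS_mulE S f i :
  \sum_k Q S i k * f k = kappa_on S i * f i + \sum_(k | e i k) (f i - f k).
Proof.
under eq_bigr => k _ do rewrite !mxE mulrDl.
rewrite big_split /= addrC; congr (_ + _).
  rewrite (bigD1 i) //= eqxx mulr1n big1 ?addr0 // => k /negbTE ki.
  by rewrite eq_sym ki mulr0n mul0r.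
rewrite sumrB sumr_const -sumrN (bigD1 i) //= eqxx; congr (_ + _).
  by rewrite mulr_natl; congr (_ *+ _); apply: eq_card => k; rewrite inE.
rewrite big_mkcond [RHS]big_mkcond; apply: eq_bigr => k _ /=.
have [->|_] := eqVneq k i; first by rewrite (negbTE (e_irr i)).
by case: (e i k); rewrite ?mulN1r ?mul0r.
Qed.

Lemma trmx_QS S : (Q S)^T = Q S.
Proof.
apply/matrixP => i j; rewrite !mxE e_sym eq_sym.
by have [->|_] := eqVneq j i.
Qed.

Lemma QS_sym S i j : Q S i j = Q S j i.
Proof. by rewrite -{1}trmx_QS mxE. Qed.

Lemma QS_mul_at_min S f j :
  (forall i, f j <= f i) -> f j < 0 -> 0 <= \sum_k Q S j k * f k ->
  kappa_on S j = 0 /\ forall l, e j l -> f l = f j.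
Proof.
move=> j_min fj_lt0; rewrite QS_mulE.
have gaps_ge0 l : e j l -> 0 <= f l - f j by rewrite subr_ge0.
have sum_gaps_ge0 : 0 <= \sum_(l | e j l) (f l - f j) := sumr_ge0 _ gaps_ge0.
have -> : \sum_(l | e j l) (f j - f l) = - \sum_(l | e j l) (f l - f j).
  by rewrite -sumrN; apply: eq_bigr => l _; rewrite opprB.
have := kappa_on_ge0 S j => kappa_ge0 Qf_ge0.
have kappa_f_le0 : kappa_on S j * f j <= 0 by rewrite mulr_ge0_le0 // ltW.
have sum_gaps0 : \sum_(l | e j l) (f l - f j) = 0 by lra.
split; last by move=> l ejl; apply/eqP; rewrite -subr_eq0 (psumr_eq0P gaps_ge0 sum_gaps0).
have : kappa_on S j * f j == 0 by apply/eqP; lra.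
by rewrite mulf_eq0 (lt_eqF fj_lt0) orbF => /eqP.
Qed.

Lemma QS_min_principle S f : S != set0 ->
  (forall i, 0 <= f i \/ 0 <= \sum_k Q S i k * f k) -> forall i, 0 <= f i.
Proof.
move=> /set0Pn [s sS] f_or_Qf_ge0 i.
have [j _ j_min] := @arg_minP _ _ _ s predT f isT.
apply: le_trans (j_min i isT); rewrite leNgt; apply/negP => fj_lt0.
have level_flat l : f l = f j -> kappa_on S l = 0 /\ forall l', e l l' -> f l' = f l.
  move=> fl; case: (f_or_Qf_ge0 l) => [|Qf_ge0]; first by rewrite fl; lra.
  by apply: QS_mul_at_min => [i'||]; rewrite ?fl ?j_min.
have level_closed : closed e [pred l | f l == f j].
  apply: intro_closed => [|l1 l2 el12 /eqP fl1]; first exact: sym_connect_sym.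
  by rewrite inE ((level_flat l1 fl1).2 l2 el12) fl1.
have := closed_connect level_closed (e_conn j s); rewrite !inE eqxx => /esym/eqP fs.
have := (level_flat s fs).1; rewrite /kappa_on sS => kappa_s0.
by have := kappa_gt0 s; rewrite kappa_s0 ltxx.
Qed.

Lemma QS_unit S : S != set0 -> Q S \in unitmx.
Proof.
move=> S0; rewrite -row_free_unit; apply: inj_row_free => v vQ0.
have Qv0 i : \sum_k Q S i k * v 0 k = 0.
  have := congr1 (fun M : 'rV[R]_n => M 0 i) vQ0; rewrite !mxE => vQ0i.
  by rewrite -[X in _ = X]vQ0i; apply: eq_bigr => k _; rewrite mulrC QS_sym.
have Qv_ge0 (sgn : R) i : 0 <= \sum_k Q S i k * (sgn * v 0 k).
  by under eq_bigr => k _ do rewrite mulrCA; rewrite -mulr_sumr Qv0 mulr0.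
apply/rowP => k; rewrite mxE; apply/eqP; rewrite eq_le.
have := QS_min_principle (f := fun k => -1 * v 0 k) S0 (fun i => or_intror (Qv_ge0 _ i)) k.
have := QS_min_principle (f := fun k => 1 * v 0 k) S0 (fun i => or_intror (Qv_ge0 _ i)) k.
by rewrite !mulN1r !mul1r oppr_ge0 => -> ->.
Qed.

Lemma QS_mul_invE S i j : S != set0 -> \sum_k Q S i k * G S k j = (i == j)%:R.
Proof.
move=> S0; have := congr1 (fun M : 'M[R]_n => M i j) (mulmxV (QS_unit S0)).
by rewrite !mxE.
Qed.

Lemma invQS_sym S i j : G S i j = G S j i.
Proof. by rewrite -{1}trmx_QS -trmx_inv mxE. Qed.

Lemma invQS_ge0 S i j : S != set0 -> 0 <= G S i j.
Proof.
move=> S0; apply: (QS_min_principle (f := G S ^~ j) S0) => k.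
by right; rewrite QS_mul_invE // ler0n.
Qed.

(* The column G_uu G_.v - G_uv G_.u vanishes at u and Q_S maps it to G_uu e_v. *)
Lemma invQS_minor_ge0 S u v i : S != set0 ->
  0 <= G S u u * G S i v - G S u v * G S i u.
Proof.
move=> S0; apply: (QS_min_principle (f := fun i => G S u u * G S i v - G S u v * G S i u) S0).
move=> k; have [->|ku] := eqVneq k u; first by left; rewrite [G S u v * _]mulrC subrr.
right; have expand l : Q S k l * (G S u u * G S l v - G S u v * G S l u)
    = G S u u * (Q S k l * G S l v) - G S u v * (Q S k l * G S l u) by ring.
rewrite (eq_bigr _ (fun l _ => expand l)).
rewrite sumrB -!mulr_sumr !QS_mul_invE // (negbTE ku) mulr0 subr0.
by rewrite mulr_ge0 ?invQS_ge0 ?ler0n.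
Qed.

Lemma sqr_invQS_ge0 S i j : S != set0 -> 0 <= (G S *m G S) i j.
Proof. by move=> S0; rewrite mxE sumr_ge0 // => k _; rewrite mulr_ge0 ?invQS_ge0. Qed.

Lemma sqr_invQS_sym S i j : (G S *m G S) i j = (G S *m G S) j i.
Proof.
by rewrite !mxE; apply: eq_bigr => k _; rewrite mulrC [G S k j]invQS_sym [G S i k]invQS_sym.
Qed.

Lemma sqr_invQS_diag_gt0 S u : S != set0 -> 0 < (G S *m G S) u u.
Proof.
move=> S0; rewrite lt0r sqr_invQS_ge0 // andbT; apply/eqP => sq0.
have col0 i : G S i u = 0.
  have sq_ge0 k : true -> 0 <= G S k u * G S k u by rewrite mulr_ge0 ?invQS_ge0.
  have sum0 : \sum_k G S k u * G S k u = 0.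
    by rewrite -[RHS]sq0 mxE; apply: eq_bigr => k _; rewrite invQS_sym.
  by have /eqP := @psumr_eq0P _ _ _ _ sq_ge0 sum0 i isT; rewrite mulf_eq0 orbb => /eqP.
have := QS_mul_invE u u S0; rewrite eqxx big1 => [/eqP|k _]; last by rewrite col0 mulr0.
by rewrite eq_sym oner_eq0.
Qed.

Lemma invQS_sqr_minor_le S u v : S != set0 ->
  G S u v * (G S *m G S) u u <= G S u u * (G S *m G S) u v.
Proof.
move=> S0; rewrite -subr_ge0 !mxE !mulr_sumr -sumrB sumr_ge0 // => i _.
rewrite (_ : _ - _ = G S u i * (G S u u * G S i v - G S u v * G S i u)); last by ring.
by rewrite mulr_ge0 ?invQS_ge0 ?invQS_minor_ge0.
Qed.

Lemma QS_setU1 S u : u \notin S -> Q (S :|: [set u]) = Q S + kappa u *: delta_mx u u.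
Proof.
move=> uS; apply/matrixP => i j; rewrite !mxE -addrA; congr (_ + _).
rewrite !inE; have [->|iu] := eqVneq i u; last by rewrite orbF mulr0 addr0.
by rewrite (negbTE uS) /= mul0rn add0r eq_sym; case: (j == u); rewrite ?mulr1 ?mulr0.
Qed.

Lemma invQS_denom_gt0 S u : S != set0 -> 0 < 1 + kappa u * G S u u.
Proof. by move=> S0; rewrite ltr_pwDl ?mulr_ge0 ?invQS_ge0 // ltW. Qed.

Lemma invQS_setU1 S u : S != set0 -> u \notin S ->
  G (S :|: [set u]) =
  G S - (kappa u / (1 + kappa u * G S u u)) *: (col u (G S) *m row u (G S)).
Proof.
move=> S0 uS; rewrite QS_setU1 // invmx_add_delta ?QS_unit //.
by rewrite gt_eqF ?invQS_denom_gt0.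
Qed.

Lemma trQinv_setU1 S u : S != set0 -> u \notin S ->
  F S - F (S :|: [set u]) = kappa u / (1 + kappa u * G S u u) * (G S *m G S) u u.
Proof.
move=> S0 uS; rewrite /trQinv invQS_setU1 // raddfB /= mxtraceZ mxtrace_col_mul_row.
by rewrite opprB addrC subrK.
Qed.

Lemma trQinv_setU1_lt S u : S != set0 -> u \notin S -> F (S :|: [set u]) < F S.
Proof.
move=> S0 uS; rewrite -subr_gt0 trQinv_setU1 //.
by rewrite mulr_gt0 ?divr_gt0 ?sqr_invQS_diag_gt0 ?invQS_denom_gt0.
Qed.

Lemma trQinv_ge0 S : S != set0 -> 0 <= F S.
Proof. by move=> S0; rewrite /trQinv /mxtrace sumr_ge0 // => i _; rewrite invQS_ge0. Qed.

Lemma trQinv_supermodular A u v : A != set0 -> v \notin A :|: [set u] ->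
  F (A :|: [set u]) - F (A :|: [set u] :|: [set v]) <= F A - F (A :|: [set v]).
Proof.
move=> A0; have [uA|uA] := boolP (u \in A).
  by rewrite (setUidPl _ : A :|: [set u] = A) ?sub1set.
move=> vAu; have vA : v \notin A by apply: contra vAu; rewrite inE => ->.
have Au0 : A :|: [set u] != set0.
  by apply/set0Pn; exists u; rewrite !inE eqxx orbT.
have G'vv_ge0 := invQS_ge0 v v Au0.
rewrite (trQinv_setU1 A0 vA) (trQinv_setU1 Au0 vAu).
rewrite invQS_setU1 // in G'vv_ge0 *.
rewrite sqr_rank_one_update_diag !rank_one_updateE in G'vv_ge0 *.
rewrite [G A v u]invQS_sym [(G A *m G A) v u]sqr_invQS_sym in G'vv_ge0 *.
set a := kappa u / _; set p := G A u u; set q := G A v v; set r := G A u v.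
set X := (G A *m G A) u u; set Y := (G A *m G A) v v; set Z := (G A *m G A) u v.
have d_gt0 := invQS_denom_gt0 u A0.
have a_ge0 : 0 <= a by rewrite divr_ge0 ?ltW.
have ap_le1 : a * p <= 1.
  by rewrite mulrAC ler_pdivrMr // mul1r lerDr.
have rX_le : r * X <= p * Z by apply: invQS_sqr_minor_le.
have rY_le : r * Y <= q * Z.
  by rewrite /r /Z invQS_sym sqr_invQS_sym; apply: invQS_sqr_minor_le.
have -> : Y - a * r * Z - a * r * Z + a ^+ 2 * r * r * X
          = Y - 2 * a * r * Z + a ^+ 2 * r ^+ 2 * X by ring.
rewrite -expr2 in G'vv_ge0 *.
exact: rank_one_decrement_le a_ge0 ap_le1 (ltW (kappa_gt0 v)) (invQS_ge0 u v A0)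
  (sqr_invQS_ge0 u v A0) rX_le rY_le G'vv_ge0.
Qed.

End LeaderSelection.

Lemma mean_le_greedy_bound (R : realType) (x o b : R) :
  0 <= o -> o <= b -> x <= (o + b) / 2 ->
  x / 2 <= (1 - (expR 1)^-1) * (o / 2) + b / expR 1.
Proof.
move=> o_ge0 o_le_b x_le; have e_le4 := expR1_le4 R; have e_gt0 := expR_gt0 (1 : R).
set E := expR 1 in e_le4 e_gt0 *.
rewrite (_ : _ + _ = ((E - 1) * o + 2 * b) / (2 * E)); last by field; rewrite gt_eqF.
rewrite ler_pdivlMr ?mulr_gt0 //; nra.
Qed.

Theorem theorem3 (R : realType) (n : nat) (e : rel 'I_n) (kappa : 'I_n -> R)
  (k : nat) (Sg : {set 'I_n}) (hhat B : R) :
  simple_graph e -> connected_graph e ->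
  (forall i, 0 < kappa i) ->
  (1 <= k)%N ->
  greedy_output e kappa k Sg ->
  is_opt_value e kappa k hhat ->
  is_B e kappa B ->
  ((#|Sg| < k)%N -> Hval e kappa Sg = hhat) /\
  (#|Sg| = k ->
     Hval e kappa Sg <= (1 - (expR 1)^-1) * hhat + B / expR 1).
Proof.
move=> [e_sym e_irr] e_conn kappa_gt0 _ [s [s_size s_head s_step -> s_stop]].
move=> [[O /andP [O0 O_le_k] <-] O_min] [_ B_max].
have F_lt := trQinv_setU1_lt e_sym e_irr e_conn kappa_gt0.
have F_super := trQinv_supermodular e_sym e_irr e_conn kappa_gt0.
rewrite /Hval (card_greedy_run s_step); split => [lt_k | s_k].
  apply/le_anti/andP; split; last first.
    by apply: O_min; rewrite /feasible (greedy_run_neq0 s_size) (card_greedy_run s_step) ltnW.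
  by rewrite ler_wpM2r ?invr_ge0 ?ler0n // (greedy_stop_early_le F_lt s_size s_stop).
have [w wO] := set0Pn _ O0.
apply: mean_le_greedy_bound (trQinv_ge0 e_sym e_irr e_conn kappa_gt0 O0) _ _.
  exact: le_trans (F_le_set1 F_lt wO) (B_max w).
exact: (greedy_full_le F_lt F_super s_size s_head s_step s_k O0 O_le_k B_max).
Qed.
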